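(* For integers $n\ge m\ge k\ge0$, \[\Big(\frac nm\Big)^k\le\Big(\frac nm\Big)^k\exp\!\Big(\frac{n-m}{nm}\frac{k(k-1)}{2}\Big)\le\binom nk\Big/\binom mk\le\frac{\exp(n\,\mathrm H(k/n))}{\exp(m\,\mathrm H(k/m))}\le\Big(\frac nm\Big)^k e^{k^2/m}.\]
   Context: $\mathrm H(x)=x\log(1/x)+(1-x)\log(1/(1-x))$ is the binary entropy function with natural logarithm (with $\mathrm H(0)=0$). *)

From Stdlib Require Import Reals.
Open Scope R_scope.

Definition binH (x : R) : R :=
  if Req_EM_T x 0 then 0 else x * ln (1 / x) + (1 - x) * ln (1 / (1 - x)).

From Stdlib Require Import Reals Lra Lia.
Open Scope R_scope.

(* Passing from k to k + 1 multiplies C(n,k)/C(m,k) by (n-k)/(m-k), which is at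
   least (n/m) exp(k (n-m)/(nm)) because exp y <= 1/(1-y); summing the exponents
   over k gives the lower bound.  For the entropy bound, exp(j H(k/j)) equals
   E(j) = j^j / (k^k (j-k)^(j-k)), and C(j,k)/E(j) is nonincreasing in j >= k: its
   successive quotients are e(j-k)/e(j) with e(s) = (1+1/s)^s, which increases by
   Bernoulli's inequality.  Finally E(n)/E(m) = (n/m)^k ((1-k/m)^(m-k))/((1-k/n)^(n-k)),
   and 1 + x <= exp x bounds the numerator by exp(-k(m-k)/m) and the
   denominator from below by exp(-k). *)

Lemma Rdiv_nonneg a b : 0 <= a -> 0 <= b -> 0 <= a / b.
Proof.
  intros Ha [Hb | <-].
  - apply Rmult_le_pos; [exact Ha | left; apply Rinv_0_lt_compat, Hb].
  - rewrite Rdiv_0_r; lra.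
Qed.

Lemma Rdiv_le_div_cross a b c d :
  0 < b -> 0 < d -> a * d <= c * b -> a / b <= c / d.
Proof.
  intros Hb Hd H.
  replace (a / b) with (a * d * / (b * d)) by (field; lra).
  replace (c / d) with (c * b * / (b * d)) by (field; lra).
  apply Rmult_le_compat_r; [left; apply Rinv_0_lt_compat; nra | exact H].
Qed.

Lemma exp_le_compat x y : x <= y -> exp x <= exp y.
Proof.
  intros [Hlt | ->]; [left; apply exp_increasing, Hlt | right; reflexivity].
Qed.

Lemma exp_INR_mul p a : exp (INR p * a) = exp a ^ p.
Proof.
  induction p as [|p IH].
  - simpl; rewrite Rmult_0_l; apply exp_0.
  - rewrite S_INR, Rmult_plus_distr_r, Rmult_1_l, exp_plus, IH; simpl; ring.
Qed.

Lemma exp_INR_mul_ln_INR p : exp (INR p * ln (INR p)) = INR p ^ p.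
Proof.
  destruct p as [|p].
  - simpl; rewrite Rmult_0_l; apply exp_0.
  - rewrite exp_INR_mul, exp_ln; [reflexivity | apply lt_0_INR; lia].
Qed.

Lemma exp_le_inv_one_sub y : y < 1 -> exp y <= / (1 - y).
Proof.
  intros Hy.
  pose proof (exp_ineq1_le (- y)) as H; rewrite exp_Ropp in H.
  rewrite <- (Rinv_inv (exp y)); apply Rinv_le_contravar; lra.
Qed.

Lemma pow_le_exp_pred q p : 0 <= q -> q ^ p <= exp (INR p * (q - 1)).
Proof.
  intros Hq; rewrite exp_INR_mul; apply pow_incr.
  pose proof (exp_ineq1_le (q - 1)); lra.
Qed.

Lemma exp_neg_le_pow_div p x : 0 <= x -> exp (- x) <= (INR p / (INR p + x)) ^ p.
Proof.
  intros Hx; destruct p as [|p].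
  - simpl; rewrite <- exp_0; apply exp_le_compat; lra.
  - assert (Hp : 0 < INR (S p)) by (apply lt_0_INR; lia).
    replace (- x) with (INR (S p) * - (x / INR (S p))) by (field; lra).
    rewrite exp_INR_mul; apply pow_incr; split; [left; apply exp_pos |].
    pose proof (exp_ineq1_le (x / INR (S p))) as H.
    assert (Hpos : 0 < 1 + x / INR (S p))
      by (pose proof (Rdiv_nonneg x (INR (S p)) Hx (Rlt_le _ _ Hp)); lra).
    rewrite exp_Ropp.
    replace (INR (S p) / (INR (S p) + x)) with (/ (1 + x / INR (S p))) by (field; lra).
    apply Rinv_le_contravar; assumption.
Qed.

Lemma bernoulli_ineq x n : -1 <= x -> 1 + INR n * x <= (1 + x) ^ n.
Proof.
  intros Hx; induction n as [|n IH]; [simpl; lra |].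
  rewrite S_INR; simpl.
  assert (0 <= (1 + x) * ((1 + x) ^ n - (1 + INR n * x))) by (apply Rmult_le_pos; lra).
  assert (0 <= INR n * (x * x)) by (apply Rmult_le_pos; [apply pos_INR | nra]).
  nra.
Qed.

Lemma pow_INR_self_pos a : 0 < INR a ^ a.
Proof. destruct a as [|a]; [simpl; lra | apply pow_lt, lt_0_INR; lia]. Qed.

Lemma C_pos n k : 0 < C n k.
Proof.
  unfold C.
  apply Rdiv_lt_0_compat; [| apply Rmult_lt_0_compat]; apply INR_fact_lt_0.
Qed.

Lemma C_n_0 n : C n 0 = 1.
Proof.
  unfold C; rewrite Nat.sub_0_r; simpl.
  pose proof (INR_fact_lt_0 n); field; lra.
Qed.

Lemma div_mul_exp_le_div_sub n m x : 0 < m <= n -> 0 <= x < m ->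
  n / m * exp ((n - m) / (n * m) * x) <= (n - x) / (m - x).
Proof.
  intros [Hm Hmn] [Hx Hxm].
  assert (Hden : 0 < n * m - (n - m) * x) by nra.
  assert (Hy : 1 - (n - m) / (n * m) * x = (n * m - (n - m) * x) / (n * m))
    by (field; lra).
  apply Rle_trans with (n / m * / (1 - (n - m) / (n * m) * x)).
  - apply Rmult_le_compat_l; [apply Rdiv_nonneg; lra |].
    apply exp_le_inv_one_sub.
    assert (0 < (n * m - (n - m) * x) / (n * m)) by (apply Rdiv_lt_0_compat; nra).
    lra.
  - rewrite Hy.
    replace (n / m * / ((n * m - (n - m) * x) / (n * m)))
      with (n * n / (n * m - (n - m) * x)) by (field; nra).
    (* the difference of the cross products is (n - m) x^2 *)
    apply Rdiv_le_div_cross; nra.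
Qed.

Lemma C_ratio_ge n m k : (k <= m)%nat -> (m <= n)%nat ->
  (INR n / INR m) ^ k
    * exp ((INR n - INR m) / (INR n * INR m) * (INR k * (INR k - 1) / 2))
  <= C n k / C m k.
Proof.
  intros Hkm Hmn; induction k as [|k IH].
  - rewrite !C_n_0; simpl.
    rewrite Rmult_0_l, Rdiv_0_l, Rmult_0_r, exp_0; lra.
  - assert (Hm : 0 < INR m) by (apply lt_0_INR; lia).
    assert (HSk : 0 < INR (S k)) by (apply lt_0_INR; lia).
    assert (Hmk : 0 < INR (m - k)) by (apply lt_0_INR; lia).
    pose proof (C_pos n k); pose proof (C_pos m k).
    set (c := (INR n - INR m) / (INR n * INR m)).
    replace (c * (INR (S k) * (INR (S k) - 1) / 2))
      with (c * (INR k * (INR k - 1) / 2) + c * INR k) by (rewrite S_INR; field).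
    rewrite exp_plus, (pascal_step3 n k), (pascal_step3 m k) by lia.
    replace (INR (n - k) / INR (S k) * C n k / (INR (m - k) / INR (S k) * C m k))
      with (C n k / C m k * (INR (n - k) / INR (m - k))) by (field; lra).
    replace ((INR n / INR m) ^ S k * (exp (c * (INR k * (INR k - 1) / 2)) * exp (c * INR k)))
      with ((INR n / INR m) ^ k * exp (c * (INR k * (INR k - 1) / 2))
            * (INR n / INR m * exp (c * INR k))) by (simpl; ring).
    apply Rmult_le_compat.
    + apply Rmult_le_pos; [apply pow_le, Rdiv_nonneg | left; apply exp_pos]; apply pos_INR.
    + apply Rmult_le_pos; [apply Rdiv_nonneg; apply pos_INR | left; apply exp_pos].
    + apply IH; lia.
    + rewrite !minus_INR by lia.
      apply div_mul_exp_le_div_sub; split.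
      * exact Hm.
      * apply le_INR; exact Hmn.
      * apply pos_INR.
      * apply lt_INR; lia.
Qed.

Definition entropy_binom (j k : nat) : R :=
  INR j ^ j / (INR k ^ k * INR (j - k) ^ (j - k)).

Lemma entropy_binom_pos j k : 0 < entropy_binom j k.
Proof.
  unfold entropy_binom.
  apply Rdiv_lt_0_compat; [| apply Rmult_lt_0_compat]; apply pow_INR_self_pos.
Qed.

Lemma binH_eq x : binH x = x * ln (1 / x) + (1 - x) * ln (1 / (1 - x)).
Proof.
  unfold binH; destruct (Req_EM_T x 0) as [-> |]; [| reflexivity].
  rewrite Rminus_0_r, Rdiv_1_r, ln_1; ring.
Qed.

Lemma INR_mul_div_ln_inv a j : (0 < j)%nat ->
  INR j * (INR a / INR j * ln (1 / (INR a / INR j)))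
  = INR a * ln (INR j) - INR a * ln (INR a).
Proof.
  intros Hj; assert (HJ : 0 < INR j) by (apply lt_0_INR, Hj).
  destruct a as [|a]; [simpl; rewrite Rdiv_0_l; ring |].
  assert (HA : 0 < INR (S a)) by (apply lt_0_INR; lia).
  replace (1 / (INR (S a) / INR j)) with (INR j * / INR (S a)) by (field; lra).
  rewrite ln_mult, ln_Rinv by (try apply Rinv_0_lt_compat; lra).
  field; lra.
Qed.

Lemma INR_mul_binH j k : (0 < j)%nat -> (k <= j)%nat ->
  INR j * binH (INR k / INR j)
  = INR j * ln (INR j) - INR k * ln (INR k) - INR (j - k) * ln (INR (j - k)).
Proof.
  intros Hj Hkj; assert (HJ : 0 < INR j) by (apply lt_0_INR, Hj).
  rewrite binH_eq.
  replace (1 - INR k / INR j) with (INR (j - k) / INR j)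
    by (rewrite minus_INR by exact Hkj; field; lra).
  rewrite Rmult_plus_distr_l, !INR_mul_div_ln_inv by exact Hj.
  rewrite minus_INR by exact Hkj; ring.
Qed.

Lemma exp_mul_binH j k : (k <= j)%nat ->
  exp (INR j * binH (INR k / INR j)) = entropy_binom j k.
Proof.
  intros Hkj; unfold entropy_binom; destruct j as [|j].
  - replace k with 0%nat by lia; simpl.
    rewrite Rmult_0_l, exp_0; field.
  - rewrite INR_mul_binH by lia.
    unfold Rminus; rewrite !exp_plus, !exp_Ropp, !exp_INR_mul_ln_INR.
    pose proof (pow_INR_self_pos k); pose proof (pow_INR_self_pos (S j - k)).
    field; lra.
Qed.

(* [(1 + 1/s)^s], written without division so that its value at [s = 0] is [1] *)
Definition euler_seq (s : nat) : R := INR (S s) ^ s / INR s ^ s.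

Lemma euler_seq_pos s : 0 < euler_seq s.
Proof.
  unfold euler_seq.
  apply Rdiv_lt_0_compat; [apply pow_lt, lt_0_INR; lia | apply pow_INR_self_pos].
Qed.

Lemma euler_seq_le_succ s : euler_seq s <= euler_seq (S s).
Proof.
  destruct s as [|s]; [unfold euler_seq; simpl; lra |].
  set (N := S s); set (a := INR N).
  assert (Ha : 0 < a) by (apply lt_0_INR; unfold N; lia).
  set (t := a * (a + 2) / ((a + 1) * (a + 1))).
  assert (Hstep : euler_seq (S N) = euler_seq N * ((a + 1) / a) * t ^ S N).
  { unfold euler_seq, t; rewrite !S_INR; fold a.
    replace (a + 1 + 1) with (a + 2) by ring.
    unfold Rdiv; rewrite !Rpow_mult_distr, !pow_inv, !Rpow_mult_distr.
    rewrite <- !tech_pow_Rmult.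
    assert (0 < a ^ N) by (apply pow_lt; lra).
    assert (0 < (a + 1) ^ N) by (apply pow_lt; lra).
    field; lra. }
  (* Bernoulli, since t = 1 - 1/(a+1)^2 and N + 1 = a + 1 *)
  assert (Hbern : a / (a + 1) <= t ^ S N).
  { assert (Hx : 0 < / ((a + 1) * (a + 1)) <= 1).
    { split; [apply Rinv_0_lt_compat; nra |].
      rewrite <- Rinv_1; apply Rinv_le_contravar; nra. }
    replace t with (1 + - / ((a + 1) * (a + 1))) by (unfold t; field; lra).
    eapply Rle_trans; [| apply bernoulli_ineq; lra].
    rewrite S_INR; fold a; right; field; lra. }
  rewrite Hstep; pose proof (euler_seq_pos N).
  apply Rle_trans with (euler_seq N * ((a + 1) / a) * (a / (a + 1))).
  - right; field; lra.
  - apply Rmult_le_compat_l; [| exact Hbern].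
    apply Rmult_le_pos; [lra | apply Rdiv_nonneg; lra].
Qed.

Lemma euler_seq_le s j : (s <= j)%nat -> euler_seq s <= euler_seq j.
Proof. intros Hsj; apply Rge_le, growing_prop; [exact euler_seq_le_succ | exact Hsj]. Qed.

Definition binom_entropy_ratio (k j : nat) : R := C j k / entropy_binom j k.

Lemma binom_entropy_ratio_pos k j : 0 < binom_entropy_ratio k j.
Proof.
  apply Rdiv_lt_0_compat; [apply C_pos | apply entropy_binom_pos].
Qed.

Lemma binom_entropy_ratio_succ k j : (k <= j)%nat ->
  binom_entropy_ratio k (S j) * euler_seq j = binom_entropy_ratio k j * euler_seq (j - k).
Proof.
  intros Hkj; unfold binom_entropy_ratio, entropy_binom, euler_seq.
  rewrite pascal_step2 by exact Hkj.
  replace (S j - k)%nat with (S (j - k)) by lia.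
  rewrite <- !tech_pow_Rmult.
  pose proof (pow_INR_self_pos j); pose proof (pow_INR_self_pos k).
  pose proof (pow_INR_self_pos (j - k)).
  assert (0 < INR (S j)) by (apply lt_0_INR; lia).
  assert (0 < INR (S (j - k))) by (apply lt_0_INR; lia).
  assert (0 < INR (S j) ^ j) by (apply pow_lt; lra).
  assert (0 < INR (S (j - k)) ^ (j - k)) by (apply pow_lt; lra).
  field; repeat split; lra.
Qed.

Lemma binom_entropy_ratio_succ_le k j : (k <= j)%nat ->
  binom_entropy_ratio k (S j) <= binom_entropy_ratio k j.
Proof.
  intros Hkj; apply Rmult_le_reg_r with (euler_seq j); [apply euler_seq_pos |].
  rewrite binom_entropy_ratio_succ by exact Hkj.
  apply Rmult_le_compat_l.
  - left; apply binom_entropy_ratio_pos.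
  - apply euler_seq_le; lia.
Qed.

Lemma binom_entropy_ratio_le k m n : (k <= m)%nat -> (m <= n)%nat ->
  binom_entropy_ratio k n <= binom_entropy_ratio k m.
Proof.
  intros Hkm Hmn; induction Hmn as [| n Hmn IH]; [lra |].
  eapply Rle_trans; [apply binom_entropy_ratio_succ_le; lia | exact IH].
Qed.

Lemma C_ratio_le_entropy n m k : (k <= m)%nat -> (m <= n)%nat ->
  C n k / C m k
  <= exp (INR n * binH (INR k / INR n)) / exp (INR m * binH (INR k / INR m)).
Proof.
  intros Hkm Hmn; rewrite !exp_mul_binH by lia.
  pose proof (entropy_binom_pos n k); pose proof (entropy_binom_pos m k).
  replace (C n k) with (binom_entropy_ratio k n * entropy_binom n k)
    by (unfold binom_entropy_ratio; field; lra).
  replace (C m k) with (binom_entropy_ratio k m * entropy_binom m k)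
    by (unfold binom_entropy_ratio; field; lra).
  pose proof (binom_entropy_ratio_pos k m).
  apply Rdiv_le_div_cross; [apply Rmult_lt_0_compat; lra | lra |].
  replace (binom_entropy_ratio k n * entropy_binom n k * entropy_binom m k)
    with (binom_entropy_ratio k n * (entropy_binom n k * entropy_binom m k)) by ring.
  replace (entropy_binom n k * (binom_entropy_ratio k m * entropy_binom m k))
    with (binom_entropy_ratio k m * (entropy_binom n k * entropy_binom m k)) by ring.
  apply Rmult_le_compat_r; [left; apply Rmult_lt_0_compat; lra |].
  apply binom_entropy_ratio_le; assumption.
Qed.

Lemma entropy_binom_0 j : entropy_binom j 0 = 1.
Proof.
  unfold entropy_binom; rewrite Nat.sub_0_r; simpl.
  pose proof (pow_INR_self_pos j); field; lra.
Qed.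

Lemma entropy_binom_eq j k : (0 < j)%nat -> (k <= j)%nat ->
  entropy_binom j k = INR j ^ k / INR k ^ k / (INR (j - k) / INR j) ^ (j - k).
Proof.
  intros Hj Hkj; unfold entropy_binom.
  assert (HJ : 0 < INR j) by (apply lt_0_INR, Hj).
  replace (INR j ^ j) with (INR j ^ k * INR j ^ (j - k))
    by (rewrite <- pow_add; f_equal; lia).
  unfold Rdiv; rewrite Rpow_mult_distr, pow_inv.
  pose proof (pow_INR_self_pos k); pose proof (pow_INR_self_pos (j - k)).
  assert (0 < INR j ^ (j - k)) by (apply pow_lt, HJ).
  field; lra.
Qed.

Lemma pow_sub_div_pos j k : (0 < j)%nat -> 0 < (INR (j - k) / INR j) ^ (j - k).
Proof.
  intros Hj; destruct (j - k)%nat as [|p]; [simpl; lra |].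
  apply pow_lt, Rdiv_lt_0_compat; apply lt_0_INR; lia.
Qed.

Lemma pow_sub_div_le_exp j k : (0 < j)%nat -> (k <= j)%nat ->
  (INR (j - k) / INR j) ^ (j - k) <= exp (- INR k * INR (j - k) / INR j).
Proof.
  intros Hj Hkj; assert (HJ : 0 < INR j) by (apply lt_0_INR, Hj).
  eapply Rle_trans; [apply pow_le_exp_pred, Rdiv_nonneg; apply pos_INR |].
  apply exp_le_compat; right; rewrite minus_INR by exact Hkj; field; lra.
Qed.

Lemma exp_neg_le_pow_sub_div j k : (k <= j)%nat ->
  exp (- INR k) <= (INR (j - k) / INR j) ^ (j - k).
Proof.
  intros Hkj; replace (INR j) with (INR (j - k) + INR k)
    by (rewrite minus_INR by exact Hkj; ring).
  apply exp_neg_le_pow_div, pos_INR.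
Qed.

Lemma entropy_ratio_le n m k : (k <= m)%nat -> (m <= n)%nat ->
  exp (INR n * binH (INR k / INR n)) / exp (INR m * binH (INR k / INR m))
  <= (INR n / INR m) ^ k * exp (INR k ^ 2 / INR m).
Proof.
  intros Hkm Hmn; rewrite !exp_mul_binH by lia.
  destruct k as [|k].
  { rewrite !entropy_binom_0; simpl; rewrite Rmult_0_l, Rdiv_0_l, exp_0; lra. }
  assert (HM : 0 < INR m) by (apply lt_0_INR; lia).
  rewrite !entropy_binom_eq by lia.
  set (A := (INR (m - S k) / INR m) ^ (m - S k)).
  set (B := (INR (n - S k) / INR n) ^ (n - S k)).
  assert (HA0 : 0 < A) by (apply pow_sub_div_pos; lia).
  assert (HB0 : 0 < B) by (apply pow_sub_div_pos; lia).
  pose proof (pow_INR_self_pos (S k)).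
  assert (0 < INR m ^ S k) by (apply pow_lt, HM).
  replace (INR n ^ S k / INR (S k) ^ S k / B / (INR m ^ S k / INR (S k) ^ S k / A))
    with ((INR n / INR m) ^ S k * (A / B))
    by (unfold Rdiv; rewrite Rpow_mult_distr, pow_inv; field; repeat split; lra).
  apply Rmult_le_compat_l; [apply pow_le, Rdiv_nonneg; apply pos_INR |].
  replace (exp (INR (S k) ^ 2 / INR m))
    with (exp (- INR (S k) * INR (m - S k) / INR m) / exp (- INR (S k))).
  - unfold Rdiv; apply Rmult_le_compat.
    + left; exact HA0.
    + left; apply Rinv_0_lt_compat, HB0.
    + apply pow_sub_div_le_exp; lia.
    + apply Rinv_le_contravar; [apply exp_pos | apply exp_neg_le_pow_sub_div; lia].
  - unfold Rdiv at 1; rewrite <- exp_Ropp, <- exp_plus; f_equal.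
    rewrite minus_INR by lia; field; lra.
Qed.

Lemma binomial_exponent_nonneg n m k : (m <= n)%nat ->
  0 <= (INR n - INR m) / (INR n * INR m) * (INR k * (INR k - 1) / 2).
Proof.
  intros Hmn; apply Rmult_le_pos.
  - pose proof (le_INR m n Hmn).
    apply Rdiv_nonneg; [lra | apply Rmult_le_pos; apply pos_INR].
  - destruct k as [|k]; [simpl; lra |].
    rewrite S_INR; pose proof (pos_INR k); nra.
Qed.

Theorem lemma6 (n m k : nat) (hnm : (m <= n)%nat) (hmk : (k <= m)%nat) :
  let r := INR n / INR m in
  r ^ k <= r ^ k * exp ((INR n - INR m) / (INR n * INR m) * (INR k * (INR k - 1) / 2))
  /\ r ^ k * exp ((INR n - INR m) / (INR n * INR m) * (INR k * (INR k - 1) / 2))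
       <= C n k / C m k
  /\ C n k / C m k
       <= exp (INR n * binH (INR k / INR n)) / exp (INR m * binH (INR k / INR m))
  /\ exp (INR n * binH (INR k / INR n)) / exp (INR m * binH (INR k / INR m))
       <= r ^ k * exp (INR k ^ 2 / INR m).
Proof.
  intros r; split; [| split; [| split]].
  - rewrite <- (Rmult_1_r (r ^ k)) at 1.
    apply Rmult_le_compat_l; [apply pow_le, Rdiv_nonneg; apply pos_INR |].
    rewrite <- exp_0 at 1; apply exp_le_compat, binomial_exponent_nonneg, hnm.
  - apply C_ratio_ge; assumption.
  - apply C_ratio_le_entropy; assumption.
  - apply entropy_ratio_le; assumption.
Qed.
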